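(* Consider the following transmitter-pulse/receiver selection setting. There are $I$ transmitters, each able to transmit $P$ pulses, and $R$ receivers. Let $\mathcal{P}=\{a_{i,p}: 1\le i\le I,\ 1\le p\le P\}$ be the set of all $IP$ transmitter-pulses, $\mathcal{R}=\{b_1,\dots,b_R\}$ the set of all receivers, and $\mathcal{U}=\mathcal{P}\cup\mathcal{R}$ the ground set. For every receiver $r$, transmitter $i$, pulse $p$ and sample index $n\in\{1,\dots,N\}$ let $\partial y_{r,i,p}[n]\in\mathbb{C}^4$ be the vector defined in the context below (for fixed values of the unknown parameters). For $\mathcal{S}\subseteq\mathcal{U}$ write $\mathcal{A}=\mathcal{S}\cap\mathcal{P}$, $\mathcal{B}=\mathcal{S}\cap\mathcal{R}$ and let $\mathcal{Y}(\mathcal{S})=\{(r,i,p): b_r\in\mathcal{B},\ a_{i,p}\in\mathcal{A}\}$ be the set of measurement indices generated by $\mathcal{S}$. Define the modified frame potential $$\tilde{\mathrm{FP}}(\mathcal{S})=\sum_{y,y'\in\mathcal{Y}(\mathcal{S})}\sum_{n=1}^N\left|\frac{\langle\partial y[n],\partial y'[n]\rangle}{\langle\partial y[n],\partial y[n]\rangle\,\langle\partial y'[n],\partial y'[n]\rangle}\right|^2,$$ where the sum runs over all ordered pairs $(y,y')$ of elements of $\mathcal{Y}(\mathcal{S})$ and $\langle\mathbf{a},\mathbf{b}\rangle=\mathbf{a}^H\mathbf{b}$, and define the set function $G:2^{\mathcal{U}}\to\mathbb{R}_+$ by $G(\mathcal{X})=\tilde{\mathrm{FP}}(\mathcal{U})-\tilde{\mathrm{FP}}(\mathcal{U}\setminus\mathcal{X})$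 for $\mathcal{X}\subseteq\mathcal{U}$. Then $G$ is normalized ($G(\emptyset)=0$), monotone (nondecreasing with respect to inclusion), and submodular, i.e. $G(\mathcal{S}_1\cup\{u\})-G(\mathcal{S}_1)\ge G(\mathcal{S}_2\cup\{u\})-G(\mathcal{S}_2)$ for all $\mathcal{S}_1\subseteq\mathcal{S}_2\subseteq\mathcal{U}$ and $u\in\mathcal{U}\setminus\mathcal{S}_2$.
   Context: Colocated MIMO radar model with two targets. Receiver $r$ is at position $d_r$ and transmitter $i$ at position $d_i$ on a line; $\lambda$ is the wavelength, $f_c$ the carrier frequency, $c$ the speed of light, $T_P$ the pulse repetition interval, $T_s$ the sampling period, $k$ the LFM chirp rate. Target $q\in\{1,2\}$ has complex amplitude $\alpha_q\neq 0$, range $R_q$, direction cosine $u_q$ and radial velocity $v_q$; these parameters are fixed. Let $h(t;v)=\exp(j4\pi v t/\lambda)$, $\beta_q(t)=\exp(j4\pi k t R_q/c)$, $\tau_{i,q,r}=c^{-1}[2R_q-(d_i+d_r)u_q]$, $\phi_{r,i}(u_q)=\exp(-j2\pi f_c\tau_{i,q,r})$, and $y^{(q)}_{r,i,p}[n]=\alpha_q h(pT_P+nT_s;v_q)\beta_q(nT_s)\phi_{r,i}(u_q)$. The noiseless measurement is $y_{r,i,p}[n]=y^{(1)}_{r,i,p}[n]+y^{(2)}_{r,i,p}[n]$, and its derivative with respect to $\boldsymbol\theta=[u_1,v_1,u_2,v_2]^T$ is $$\partial y_{r,i,p}[n]=\frac{j2\pi}{\lambda}\big((d_i+d_r)y^{(1)}_{r,i,p}[n],\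 2(nT_s+pT_P)y^{(1)}_{r,i,p}[n],\ (d_i+d_r)y^{(2)}_{r,i,p}[n],\ 2(nT_s+pT_P)y^{(2)}_{r,i,p}[n]\big)^T\in\mathbb{C}^4.$$ In the definition of $\tilde{\mathrm{FP}}$, $\partial y[n]$ denotes $\partial y_{r,i,p}[n]$ for the index $y=(r,i,p)$. *)

From mathcomp Require Import all_boot all_order all_algebra.
From mathcomp Require Import all_classical all_reals all_analysis.
From mathcomp Require Import complex.
Set Implicit Arguments. Unset Strict Implicit. Unset Printing Implicit Defensive.
Import Order.TTheory GRing.Theory Num.Theory.
Local Open Scope complex_scope.
Local Open Scope ring_scope.

(* Parameters of the colocated MIMO radar model with two targets.
   I transmitters, P pulses per transmitter, Rn receivers.
   Targets are indexed by bool: false = target 1, true = target 2. *)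
Record radar_params (R : realType) (I Rn : nat) := RadarParams {
  d_rx : 'I_Rn -> R;
  d_tx : 'I_I -> R;
  lambda : R;
  f_c : R;
  c_light : R;
  T_P : R;
  T_s : R;
  k_chirp : R;
  alpha : bool -> R[i];
  range : bool -> R;
  dircos : bool -> R;
  vel : bool -> R
}.

Section Model.
Variables (R : realType) (I P Rn N : nat) (prm : radar_params R I Rn).

Definition expj (theta : R) : R[i] := cos theta +i* sin theta.

Definition h_fun (t v : R) : R[i] := expj (4 * pi * v * t / lambda prm).
Definition beta_fun (q : bool) (t : R) : R[i] :=
  expj (4 * pi * k_chirp prm * t * range prm q / c_light prm).
Definition tau (i : 'I_I) (r : 'I_Rn) (q : bool) : R :=
  (2 * range prm q - (d_tx prm i + d_rx prm r) * dircos prm q) / c_light prm.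
Definition phi (r : 'I_Rn) (i : 'I_I) (q : bool) : R[i] :=
  expj (- (2 * pi * f_c prm * tau i r q)).

(* Indices are 0-based ordinals; the paper's 1-based pulse index p and sample
   index n correspond to p.+1 and n.+1. *)
Definition pulse_time (p : 'I_P) : R := (p.+1)%:R * T_P prm.
Definition sample_time (n : 'I_N) : R := (n.+1)%:R * T_s prm.

Definition ycomp (q : bool) (r : 'I_Rn) (i : 'I_I) (p : 'I_P) (n : 'I_N) : R[i] :=
  alpha prm q * h_fun (pulse_time p + sample_time n) (vel prm q)
  * beta_fun q (sample_time n) * phi r i q.

Definition meas := ('I_Rn * 'I_I * 'I_P)%type.

(* partial y_{r,i,p}[n] in C^4, derivative w.r.t. [u1; v1; u2; v2] *)
Definition dy (y : meas) (n : 'I_N) : 'cV[R[i]]_4 :=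
  let: (r, i, p) := y in
  let c := (2 * pi / lambda prm)%:C * 'i in
  let a := (d_tx prm i + d_rx prm r)%:C in
  let b := (2 * (sample_time n + pulse_time p))%:C in
  \col_(k < 4)
    (c * (if k == 0 :> nat then a * ycomp false r i p n
          else if k == 1 :> nat then b * ycomp false r i p n
          else if k == 2 :> nat then a * ycomp true r i p n
          else b * ycomp true r i p n)).

Definition cinner (a b : 'cV[R[i]]_4) : R[i] := \sum_(k < 4) (a k 0)^* * b k 0.

Definition sqmod (z : R[i]) : R := complex.Re z ^+ 2 + complex.Im z ^+ 2.

Definition ground := (('I_I * 'I_P) + 'I_Rn)%type.

Definition Yset (S : {set ground}) : {set meas} :=
  [set y : meas | (inr y.1.1 \in S) && (inl (y.1.2, y.2) \in S)].

Definition FPt (S : {set ground}) : R :=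
  \sum_(y in Yset S) \sum_(y' in Yset S) \sum_(n < N)
    sqmod (cinner (dy y n) (dy y' n) /
           (cinner (dy y n) (dy y n) * cinner (dy y' n) (dy y' n))).

Definition Gfun (X : {set ground}) : R := FPt [set: ground] - FPt (~: X).

End Model.

From mathcomp Require Import all_boot all_order all_algebra.
From mathcomp Require Import all_classical all_reals all_analysis.
From mathcomp Require Import complex.
Set Implicit Arguments. Unset Strict Implicit. Unset Printing Implicit Defensive.
Import Order.TTheory GRing.Theory Num.Theory.
Local Open Scope ring_scope.

(* A pair of measurements (y, y') is counted in FP~(S) exactly when the four
   ground elements generating it (two receivers, two transmitter-pulses) all
   lie in S, so FP~(U) - FP~(U \ X) is the total weight of the pairs whose
   generators meet X: G is a weighted coverage function.  Coverage functions
   with nonnegative weights are normalized, monotone and submodular, since the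
   marginal gain of u at S is the weight of the pairs that contain u and avoid
   S, which shrinks as S grows.  Only the nonnegativity of the summands
   |.|^2 is used. *)

Section Coverage.
Variables (R : numDomainType) (U T : finType).
Variables (supp : T -> {set U}) (w : T -> R).
Hypothesis w_ge0 : forall t, 0 <= w t.

Definition coverage (X : {set U}) : R :=
  \sum_(t | ~~ [disjoint supp t & X]) w t.

Lemma ler_sum_subpred (A B : pred T) :
  subpred A B -> \sum_(t | A t) w t <= \sum_(t | B t) w t.
Proof.
move=> AB; rewrite [X in _ <= X](bigID A) /=.
under [X in _ <= X + _]eq_bigl => t do rewrite (andb_idl (@AB t)).
by rewrite lerDl sumr_ge0.
Qed.

Lemma coverage_complement (X : {set U}) :
  \sum_t w t - \sum_(t | supp t \subset ~: X) w t = coverage X.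
Proof.
rewrite (bigID (fun t => supp t \subset ~: X)) /= addrAC subrr add0r.
by apply: eq_bigl => t; rewrite finset.disjoints_subset.
Qed.

Lemma coverage0 : coverage finset.set0 = 0.
Proof.
rewrite /coverage big_pred0 // => t.
by rewrite finset.disjoints_subset finset.setC0 finset.subsetT.
Qed.

Lemma le_coverage (X Y : {set U}) : X \subset Y -> coverage X <= coverage Y.
Proof.
move=> sXY; apply: ler_sum_subpred => t; apply: contra => dis_tY.
exact: disjointWr dis_tY.
Qed.

Lemma coverage_gain (u : U) (S : {set U}) :
  coverage (u |: S) - coverage S =
  \sum_(t | (u \in supp t) && [disjoint supp t & S]) w t.
Proof.
have hit_uS t : ~~ [disjoint supp t & u |: S] =
    (u \in supp t) || ~~ [disjoint supp t & S].
  rewrite !finset.disjoints_subset finset.setCU finset.subsetI.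
  by rewrite -!finset.disjoints_subset disjoint_sym disjoints1 negb_and negbK.
rewrite /coverage (bigID (fun t => ~~ [disjoint supp t & S])) /=.
rewrite (eq_bigl (fun t => ~~ [disjoint supp t & S])); last first.
  by move=> t; rewrite hit_uS; case: [disjoint _ & S]; rewrite ?orbT ?andbF.
rewrite addrAC subrr add0r; apply: eq_bigl => t.
by rewrite hit_uS negbK; case: [disjoint _ & S]; rewrite ?orbF ?andbT ?andbF.
Qed.

Lemma coverage_submodular (u : U) (S1 S2 : {set U}) : S1 \subset S2 ->
  coverage (u |: S2) - coverage S2 <= coverage (u |: S1) - coverage S1.
Proof.
move=> s12; rewrite !coverage_gain; apply: ler_sum_subpred => t.
by case/andP=> -> dis_t2; exact: disjointWr dis_t2.
Qed.

End Coverage.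

Section FramePotential.
Variables (R : realType) (I P Rn N : nat) (prm : radar_params R I Rn).

Definition meas_support (y : meas I P Rn) : {set ground I P Rn} :=
  [set inr y.1.1; inl (y.1.2, y.2)].

Definition pair_support (t : meas I P Rn * meas I P Rn) : {set ground I P Rn} :=
  meas_support t.1 :|: meas_support t.2.

Definition pair_weight (t : meas I P Rn * meas I P Rn) : R :=
  \sum_(n < N) sqmod (cinner (dy prm t.1 n) (dy prm t.2 n) /
    (cinner (dy prm t.1 n) (dy prm t.1 n) * cinner (dy prm t.2 n) (dy prm t.2 n))).

Lemma sqmod_ge0 (z : R[i]) : 0 <= sqmod z.
Proof. by rewrite /sqmod addr_ge0 ?sqr_ge0. Qed.

Lemma pair_weight_ge0 t : 0 <= pair_weight t.
Proof. by apply: sumr_ge0 => n _; exact: sqmod_ge0. Qed.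

Lemma mem_Yset (S : {set ground I P Rn}) y :
  (y \in Yset S) = (meas_support y \subset S).
Proof. by rewrite inE finset.subUset !finset.sub1set. Qed.

Lemma FPtE (S : {set ground I P Rn}) :
  FPt N prm S = \sum_(t | pair_support t \subset S) pair_weight t.
Proof.
rewrite /FPt pair_big /=; apply: eq_bigl => t.
by rewrite finset.subUset !mem_Yset.
Qed.

Lemma GfunE (X : {set ground I P Rn}) :
  Gfun N prm X = coverage pair_support pair_weight X.
Proof.
rewrite /Gfun !FPtE -coverage_complement; congr (_ - _).
by apply: eq_bigl => t; rewrite finset.subsetT.
Qed.

End FramePotential.

Theorem theorem1 (R : realType) (I P Rn N : nat) (prm : radar_params R I Rn)
  (halpha1 : alpha prm false != 0) (halpha2 : alpha prm true != 0) :
  let G := @Gfun R I P Rn N prm in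
  [/\ G (finset.set0 : {set ground I P Rn}) = 0,
      (forall X Y : {set ground I P Rn}, X \subset Y -> G X <= G Y)
    & (forall (S1 S2 : {set ground I P Rn}) (u : ground I P Rn),
         S1 \subset S2 -> u \notin S2 ->
         G (u |: S2) - G S2 <= G (u |: S1) - G S1)].
Proof.
move=> G; split.
- by rewrite /G GfunE coverage0.
- by move=> X Y sXY; rewrite /G !GfunE le_coverage //; exact: pair_weight_ge0.
- move=> S1 S2 u s12 _; rewrite /G !GfunE.
  by apply: coverage_submodular => //; exact: pair_weight_ge0.
Qed.
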